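(* Let $1\le i,j\le N-1$ with $i\neq j$ and $i\ne j+1$. Then $T_j^{-1}\phi_iT_j=\phi_i$ in $\mathcal H_N(s)$.
   Context: $N\ge2$, $s$ an indeterminate. $\mathcal H_N(s)$ is the algebra over $\mathbb C(s)$ (or $\mathbb C(q,s)$) generated by $T_1,\dots,T_{N-1}$ with relations $(T_i+1)(T_i-s)=0$, $T_iT_{i+1}T_i=T_{i+1}T_iT_{i+1}$, $T_iT_j=T_jT_i$ for $|i-j|>1$; $T_i^{-1}=s^{-1}(T_i+1-s)$. For $1\le i<N$, $\phi_i:=s^{i-N}T_iT_{i+1}\cdots T_{N-1}T_{N-1}\cdots T_i$. *)

From HB Require Import structures.
From mathcomp Require Import all_boot all_order all_algebra.
Set Implicit Arguments. Unset Strict Implicit. Unset Printing Implicit Defensive.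
Import GRing.Theory.
Local Open Scope ring_scope.

(* Generators T_1, ..., T_{N-1} of the Iwahori-Hecke algebra H_N(s), realised
   in an arbitrary K-algebra A (K a field, s : K nonzero).  The values of T at
   indices outside 1..N-1 are irrelevant. *)
Definition hecke_rels (K : fieldType) (A : algType K) (N : nat) (s : K)
    (T : nat -> A) : Prop :=
  [/\ (forall i, (1 <= i < N)%N -> (T i + 1) * (T i - s%:A) = 0),
      (forall i, (1 <= i)%N -> (i.+1 < N)%N ->
          T i * T i.+1 * T i = T i.+1 * T i * T i.+1)
    & (forall i j, (1 <= i < N)%N -> (1 <= j < N)%N -> (i.+1 < j \/ j.+1 < i)%N ->
          T i * T j = T j * T i)].

Definition Tinv (K : fieldType) (A : algType K) (s : K) (T : nat -> A) (i : nat) : A :=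
  s^-1 *: (T i + 1 - s%:A).

Definition phi (K : fieldType) (A : algType K) (N : nat) (s : K) (T : nat -> A)
    (i : nat) : A :=
  (s ^- (N - i)) *:
    ((\prod_(k <- index_iota i N) T k) * (\prod_(k <- rev (index_iota i N)) T k)).

From HB Require Import structures.
From mathcomp Require Import all_boot all_order all_algebra.
From mathcomp Require Import zify.
Set Implicit Arguments. Unset Strict Implicit. Unset Printing Implicit Defensive.
Import GRing.Theory.
Local Open Scope ring_scope.

(* Write phi_i = s^(i-N) U_i D_i with U_i = T_i ... T_(N-1) and
   D_i = T_(N-1) ... T_i.  If j + 1 < i, T_j commutes with every factor.  If
   i < j, the braid relation pushes T_j through U_i as T_(j-1), which is then
   pushed through D_i back to T_j.  Either way T_j commutes with U_i D_i, and
   the quadratic relation makes s^-1 (T_j + 1 - s) a left inverse of T_j. *)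

Section HeckeGenerators.
Variables (K : fieldType) (A : algType K) (N : nat) (s : K) (T : nat -> A).
Hypothesis hecke : hecke_rels N s T.

Local Notation up a := (\prod_(k <- index_iota a N) T k).
Local Notation down a := (\prod_(k <- rev (index_iota a N)) T k).

Lemma Tinv_mulT j : s != 0 -> (1 <= j < N)%N -> Tinv s T j * T j = 1.
Proof.
move=> s_neq0 jN; case: hecke => quad _ _.
have expand : (T j + 1 - s%:A) * T j - s%:A = (T j + 1) * (T j - s%:A).
  rewrite !mulrDl ?mulrBl !mulrBr ?mul1r ?mulr1 ?mulNr ?mulr_algl ?mulr_algr.
  by rewrite -!addrA; congr (_ + _); rewrite addrCA.
have sol : (T j + 1 - s%:A) * T j = s%:A.
  by apply/eqP; rewrite -subr_eq0 expand quad.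
by rewrite /Tinv -scalerAl sol scalerA mulVf // scale1r.
Qed.

Lemma T_braid a : (1 <= a)%N -> (a.+1 < N)%N ->
  T a * T a.+1 * T a = T a.+1 * T a * T a.+1.
Proof. by case: hecke => _ braid _; apply: braid. Qed.

Lemma comm_T_far j k : (1 <= j)%N -> (j.+1 < k < N)%N -> GRing.comm (T j) (T k).
Proof. by case: hecke => _ _ far /= j1 /andP[jk kN]; apply: far; lia. Qed.

Lemma comm_T_prod_above j (r : seq nat) : (1 <= j)%N ->
  {in r, forall k, j.+1 < k < N}%N -> GRing.comm (T j) (\prod_(k <- r) T k).
Proof.
move=> j1 r_above; rewrite big_seq.
by apply: commr_prod => k /r_above; apply: comm_T_far.
Qed.

Lemma up_prod_above j a : (1 <= j)%N -> (j.+1 < a)%N -> GRing.comm (T j) (up a).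
Proof. by move=> j1 ja; apply: comm_T_prod_above => // k; rewrite mem_index_iota; lia. Qed.

Lemma down_prod_above j a : (1 <= j)%N -> (j.+1 < a)%N -> GRing.comm (T j) (down a).
Proof.
by move=> j1 ja; apply: comm_T_prod_above => // k; rewrite mem_rev mem_index_iota; lia.
Qed.

Lemma upS a : (a < N)%N -> up a = T a * up a.+1.
Proof. exact: big_ltn. Qed.

Lemma downS a : (a < N)%N -> down a = down a.+1 * T a.
Proof.
move=> aN; rewrite /index_iota (_ : N - a = (N - a.+1).+1)%N; last by lia.
by rewrite -/(iota a.+1 _) rev_cons big_rcons.
Qed.

Lemma T_shift_up a j : (1 <= a < j)%N -> (j < N)%N -> T j * up a = up a * T j.-1.
Proof.
move=> /andP[a1 aj]; have [d ->] : exists d, j = (a + d).+1 by exists (j - a.+1)%N; lia.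
elim: d a a1 {aj} => [|d IH] a a1 jN /=.
- rewrite addn0 (@upS a) 1?(@upS a.+1); try lia.
  rewrite !mulrA -T_braid //; last by lia.
  by rewrite -!mulrA (@up_prod_above a a.+2 a1).
- rewrite (@upS a); last by lia.
  rewrite mulrA -(@comm_T_far a (a + d.+1).+1) //; last by lia.
  by rewrite -mulrA -addSnnS IH ?mulrA //; lia.
Qed.

Lemma T_shift_down a j : (1 <= a < j)%N -> (j < N)%N -> T j.-1 * down a = down a * T j.
Proof.
move=> /andP[a1 aj]; have [d ->] : exists d, j = (a + d).+1 by exists (j - a.+1)%N; lia.
elim: d a a1 {aj} => [|d IH] a a1 jN.
- rewrite addn0 /= (@downS a) 1?(@downS a.+1); try lia.
  rewrite !mulrA (@down_prod_above a a.+2 a1) //.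
  by rewrite -!mulrA; congr (_ * _); rewrite !mulrA T_braid //; lia.
- rewrite (@downS a); last by lia.
  rewrite -addSnnS mulrA IH //; last by lia.
  by rewrite -!mulrA (@comm_T_far a (a.+1 + d).+1) //; lia.
Qed.

Lemma comm_T_up_down i j : (1 <= i)%N -> (1 <= j < N)%N -> (j.+1 < i \/ i < j)%N ->
  GRing.comm (T j) (up i * down i).
Proof.
move=> i1 /andP[j1 jN] [ji | ij].
- by rewrite /GRing.comm mulrA up_prod_above // -mulrA down_prod_above // mulrA.
- have ij_range : (1 <= i < j)%N by rewrite i1.
  by rewrite /GRing.comm mulrA T_shift_up // -mulrA T_shift_down // mulrA.
Qed.

End HeckeGenerators.

Theorem lemma2p2 (K : fieldType) (A : algType K) (N : nat) (s : K) (T : nat -> A) :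
  (2 <= N)%N -> s != 0 -> hecke_rels N s T ->
  forall i j : nat, (1 <= i <= N - 1)%N -> (1 <= j <= N - 1)%N ->
    i != j -> i != j.+1 ->
    Tinv s T j * phi N s T i * T j = phi N s T i.
Proof.
move=> _ s_neq0 hecke i j i_range j_range ij ij1.
have jN : (1 <= j < N)%N by lia.
have j_far_or_below : (j.+1 < i \/ i < j)%N by lia.
have comm_j : GRing.comm (T j) (\prod_(k <- index_iota i N) T k *
                                \prod_(k <- rev (index_iota i N)) T k).
  by apply: (comm_T_up_down hecke); lia.
rewrite /phi -scalerAr -scalerAl; congr (_ *: _).
by rewrite -mulrA -comm_j (mulrA (Tinv s T j)) (Tinv_mulT hecke) ?mul1r.
Qed.
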